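(* Let $p>1$ and $n>1$ be an integer. Let $f(z) = c_0 + c_1 z + c_2 z^2 + \dots$ be a bounded holomorphic function on $\mathbb D = \{z:|z|<1\}$ with no zeros in $\mathbb D$, belonging to $H^p$, which is not a polynomial of degree at most $n$. Then there exists $\varepsilon_0>0$ such that for every $\varepsilon<\varepsilon_0$ and every point $\mathbf d = (d_0, d_1, \dots, d_n) \in \mathbb C^{n+1}$ with $|\mathbf d| \le \varepsilon$ there is a bounded, zero-free holomorphic function $f^*(z) = c_0^* + c_1^* z + c_2^* z^2 + \dots \in H^p$ on $\mathbb D$ satisfying $c_j^* = c_j + d_j$ for all $j = 0, 1, \dots, n$ and $$\|f^*\|_p = \|f\|_p + O(\varepsilon),$$ i.e. $\bigl|\|f^*\|_p - \|f\|_p\bigr| \le C\varepsilon$ with a constant $C$ independent of $\mathbf d$ and $\varepsilon$.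
   Context: $H^p$ is the Hardy space of holomorphic functions on $\mathbb D$ with norm $\|f\|_p = \sup_{r<1}\bigl(\frac{1}{2\pi}\int_{-\pi}^{\pi}|f(re^{i\theta})|^p\,d\theta\bigr)^{1/p}$. $|\mathbf d|$ denotes the Euclidean norm on $\mathbb C^{n+1}$. *)

From Stdlib Require Import Reals.
From Coquelicot Require Import Coquelicot.
From Coquelicot Require Export Complex.
Open Scope R_scope.

Definition in_disc (z : C) : Prop := Cmod z < 1.

Definition holo_disc (f : C -> C) : Prop :=
  forall z : C, in_disc z -> ex_derive f z.

Definition bounded_disc (f : C -> C) : Prop :=
  exists M : R, forall z : C, in_disc z -> Cmod (f z) <= M.

Definition zero_free_disc (f : C -> C) : Prop :=
  forall z : C, in_disc z -> f z <> 0%C.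

Definition taylor_coeffs (f : C -> C) (c : nat -> C) : Prop :=
  forall z : C, in_disc z -> is_pseries c z (f z).

Definition poly_le_on_disc (f : C -> C) (n : nat) : Prop :=
  exists a : nat -> C, forall z : C, in_disc z ->
    f z = sum_n (fun k => (a k * z ^ k)%C) n.

(* x^p for x >= 0 and real p > 0, with the convention 0^p = 0. *)
Definition rpow (x p : R) : R := if Rle_dec x 0 then 0 else Rpower x p.

Definition Mp_mean (p : R) (f : C -> C) (r : R) : R :=
  / (2 * PI) * RInt (fun t => rpow (Cmod (f (r * cos t, r * sin t))) p) (- PI) PI.

Definition Hp_vals (p : R) (f : C -> C) (y : R) : Prop :=
  exists r : R, 0 <= r < 1 /\ y = rpow (Mp_mean p f r) (/ p).

Definition in_Hp (p : R) (f : C -> C) : Prop :=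
  holo_disc f /\ exists M : R, forall y, Hp_vals p f y -> y <= M.

Definition Hp_norm (p : R) (f : C -> C) : R := real (Lub_Rbar (Hp_vals p f)).

Definition eucl_norm (n : nat) (d : nat -> C) : R :=
  sqrt (sum_n (fun j => (Cmod (d j)) ^ 2) n).

(* Since c_0 = f(0) <> 0, the lower-triangular Toeplitz system
   sum_{j<=k} c_{k-j} e_j = d_k (k <= n) can be solved with |e_j| <= K |d|.
   Put f* = f (1 + Q) with Q z = sum_{j<=n} e_j z^j: its first n+1 Taylor
   coefficients are c_k + d_k, and on the disc |Q| <= a = O(|d|) < 1, so
   f* has no zeros and (1 - a) |f| <= |f*| <= (1 + a) |f| pointwise, whence
   (1 - a) ||f||_p <= ||f*||_p <= (1 + a) ||f||_p. *)

From Stdlib Require Import Reals Lra Lia.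
From Coquelicot Require Import Coquelicot Complex.
Open Scope R_scope.

Lemma Cmod_circle (r t : R) : 0 <= r -> Cmod (r * cos t, r * sin t) = r.
Proof.
  intros Hr. unfold Cmod; simpl.
  replace (r * cos t * (r * cos t * 1) + r * sin t * (r * sin t * 1))
    with (r ^ 2 * (Rsqr (sin t) + Rsqr (cos t))) by (unfold Rsqr; ring).
  rewrite sin2_cos2, Rmult_1_r. now apply sqrt_pow2.
Qed.

Lemma circle_in_disc (r t : R) : 0 <= r < 1 -> in_disc (r * cos t, r * sin t).
Proof. intros [H0 H1]. unfold in_disc. now rewrite Cmod_circle. Qed.

Lemma continuous_pair (g h : R -> R) (t : R) :
  continuous g t -> continuous h t ->
  @continuous R_UniformSpace C_UniformSpace (fun s => (g s, h s)) t.
Proof.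
  intros Hg Hh P [eps HP].
  assert (Hgt := Hg _ (locally_ball (g t) eps)).
  assert (Hht := Hh _ (locally_ball (h t) eps)).
  unfold filtermap in *. generalize (filter_and _ _ Hgt Hht).
  apply filter_imp. intros s [Hgs Hhs]. now apply HP.
Qed.

Lemma continuous_Cmod (z : C) : @continuous C_UniformSpace R_UniformSpace Cmod z.
Proof. exact (filterlim_norm (V := C_NormedModule) z). Qed.

Lemma continuous_of_ex_derive (F : C -> C) (w : C) :
  ex_derive F w -> @continuous C_UniformSpace C_UniformSpace F w.
Proof. intros H P HP. apply locally_C. exact (ex_derive_continuous F w H P HP). Qed.

Lemma rpow_nonneg (x p : R) : 0 <= rpow x p.
Proof. unfold rpow. destruct (Rle_dec x 0); [lra | left; apply exp_pos]. Qed.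

Lemma rpow_pos (x p : R) : 0 < x -> rpow x p = Rpower x p.
Proof. intros Hx. unfold rpow. destruct (Rle_dec x 0); [lra | reflexivity]. Qed.

Lemma continuous_circle_rpow (p : R) (F : C -> C) (r t : R) :
  holo_disc F -> zero_free_disc F -> 0 <= r < 1 ->
  continuous (fun s => rpow (Cmod (F (r * cos s, r * sin s))) p) t.
Proof.
  intros HF HFz Hr.
  assert (Hpos : forall s, 0 < Cmod (F (r * cos s, r * sin s)))
    by (intros s; apply Cmod_gt_0, HFz, circle_in_disc, Hr).
  apply continuous_ext with (f := fun s => exp (p * ln (Cmod (F (r * cos s, r * sin s))))).
  { intros s. now rewrite rpow_pos. }
  apply continuous_exp_comp.
  apply (continuous_scal_r (U := R_UniformSpace) (K := R_AbsRing) (V := R_NormedModule) p).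
  apply (continuous_comp (fun s => Cmod (F (r * cos s, r * sin s))) ln);
    [|apply continuous_ln, Hpos].
  apply (continuous_comp (U := R_UniformSpace) (fun s => F (r * cos s, r * sin s)) Cmod);
    [|apply continuous_Cmod].
  apply (continuous_comp (U := R_UniformSpace) (V := C_UniformSpace)
           (fun s => (r * cos s, r * sin s)) F);
    [|apply continuous_of_ex_derive, HF, circle_in_disc, Hr].
  apply continuous_pair.
  - apply (continuous_scal_r (U := R_UniformSpace) (K := R_AbsRing) (V := R_NormedModule) r cos).
    apply continuous_cos.
  - apply (continuous_scal_r (U := R_UniformSpace) (K := R_AbsRing) (V := R_NormedModule) r sin).
    apply continuous_sin.
Qed.

Lemma ex_RInt_circle_rpow (p : R) (F : C -> C) (r : R) :
  holo_disc F -> zero_free_disc F -> 0 <= r < 1 ->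
  ex_RInt (fun t => rpow (Cmod (F (r * cos t, r * sin t))) p) (- PI) PI.
Proof.
  intros HF HFz Hr. apply (ex_RInt_continuous (V := R_CompleteNormedModule)).
  intros t _. now apply continuous_circle_rpow.
Qed.

Lemma rpow_le_scale (lam p x y : R) : 0 < lam -> 0 < p ->
  y <= Rpower lam p * x -> rpow y (/ p) <= lam * rpow x (/ p).
Proof.
  intros Hlam Hp Hy.
  destruct (Rle_dec y 0) as [Hy0 | Hy0].
  { unfold rpow at 1. destruct (Rle_dec y 0); [|lra].
    apply Rmult_le_pos; [lra | apply rpow_nonneg]. }
  assert (Hlp : 0 < Rpower lam p) by apply exp_pos.
  assert (Hx : 0 < x) by nra.
  rewrite !rpow_pos by lra.
  apply Rle_trans with (Rpower (Rpower lam p * x) (/ p)).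
  - apply Rle_Rpower_l; [left; now apply Rinv_0_lt_compat | lra].
  - rewrite <- Rpower_mult_distr, Rpower_mult, Rinv_r, Rpower_1 by lra. lra.
Qed.

Lemma Mp_mean_le_scale (p lam : R) (F G : C -> C) (r : R) :
  0 < p -> 0 < lam ->
  holo_disc F -> zero_free_disc F -> holo_disc G -> zero_free_disc G ->
  (forall w, in_disc w -> Cmod (G w) <= lam * Cmod (F w)) -> 0 <= r < 1 ->
  Mp_mean p G r <= Rpower lam p * Mp_mean p F r.
Proof.
  intros Hp Hlam HF HFz HG HGz Hle Hr.
  set (IF := fun t => rpow (Cmod (F (r * cos t, r * sin t))) p).
  set (IG := fun t => rpow (Cmod (G (r * cos t, r * sin t))) p).
  assert (HIF : ex_RInt IF (- PI) PI) by now apply ex_RInt_circle_rpow.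
  assert (Hpi : 0 < PI) by apply PI_RGT_0.
  assert (Hint : RInt IG (- PI) PI <= Rpower lam p * RInt IF (- PI) PI).
  { change (Rpower lam p * RInt IF (- PI) PI) with (scal (Rpower lam p) (RInt IF (- PI) PI)).
    rewrite <- RInt_scal by exact HIF.
    apply RInt_le; [lra | now apply ex_RInt_circle_rpow
                   | now apply (ex_RInt_scal (V := R_CompleteNormedModule)) |].
    intros t _. change (IG t <= Rpower lam p * IF t). unfold IF, IG.
    assert (Hw := circle_in_disc r t Hr).
    assert (HFw : 0 < Cmod (F (r * cos t, r * sin t))) by now apply Cmod_gt_0, HFz.
    assert (HGw : 0 < Cmod (G (r * cos t, r * sin t))) by now apply Cmod_gt_0, HGz.
    rewrite !rpow_pos, Rpower_mult_distr by lra.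
    apply Rle_Rpower_l; [lra | split; [lra | now apply Hle]]. }
  unfold Mp_mean. fold IF IG.
  assert (H2pi : 0 < / (2 * PI)) by (apply Rinv_0_lt_compat; lra).
  nra.
Qed.

Lemma real_Lub_Rbar_ub (E : R -> Prop) (M y : R) :
  (forall x, E x -> x <= M) -> E y -> y <= real (Lub_Rbar E).
Proof.
  intros HM Hy. destruct (Lub_Rbar_correct E) as [Hub Hlub].
  assert (H1 := Hub y Hy). assert (H2 := Hlub (Finite M) HM).
  destruct (Lub_Rbar E); simpl in *; easy.
Qed.

Lemma real_Lub_Rbar_le (E : R -> Prop) (y b : R) :
  E y -> (forall x, E x -> x <= b) -> real (Lub_Rbar E) <= b.
Proof.
  intros Hy Hb. destruct (Lub_Rbar_correct E) as [Hub Hlub].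
  assert (H1 := Hub y Hy). assert (H2 := Hlub (Finite b) Hb).
  destruct (Lub_Rbar E); simpl in *; easy.
Qed.

Lemma Hp_norm_le_scale (p lam : R) (F G : C -> C) :
  0 < p -> 0 < lam -> in_Hp p F -> zero_free_disc F ->
  holo_disc G -> zero_free_disc G ->
  (forall w, in_disc w -> Cmod (G w) <= lam * Cmod (F w)) ->
  in_Hp p G /\ Hp_norm p G <= lam * Hp_norm p F.
Proof.
  intros Hp Hlam [HF [M HM]] HFz HG HGz Hle.
  assert (Hval : forall y, Hp_vals p G y -> exists x, Hp_vals p F x /\ y <= lam * x).
  { intros y [r [Hr ->]]. exists (rpow (Mp_mean p F r) (/ p)). split; [now exists r|].
    now apply rpow_le_scale, Mp_mean_le_scale. }
  assert (HGM : forall y, Hp_vals p G y -> y <= lam * M).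
  { intros y Hy. destruct (Hval y Hy) as [x [Hx Hyx]]. specialize (HM x Hx). nra. }
  split; [split; [exact HG | now exists (lam * M)]|].
  apply (real_Lub_Rbar_le _ (rpow (Mp_mean p G 0) (/ p))); [exists 0; split; [lra | reflexivity]|].
  intros y Hy. destruct (Hval y Hy) as [x [Hx Hyx]].
  assert (x <= Hp_norm p F) by exact (real_Lub_Rbar_ub _ M x HM Hx). nra.
Qed.

(* C as a normed module over itself arises in two ways that are not
   convertible, and Coquelicot's product rule is stated for the other one. *)
Lemma is_derive_C_NormedModule (f : C -> C) (z l : C) :
  @is_derive C_AbsRing C_NormedModule f z l <->
  @is_derive C_AbsRing (AbsRing_NormedModule C_AbsRing) f z l.
Proof. split; intros [[? ? ?] ?]; split; [split | |split |]; assumption. Qed.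

Lemma ex_derive_Cmult (f g : C -> C) (z : C) :
  ex_derive f z -> ex_derive g z -> ex_derive (fun x => (f x * g x)%C) z.
Proof.
  intros [df Hf] [dg Hg]. eexists. apply is_derive_C_NormedModule.
  apply (is_derive_mult (K := C_AbsRing));
    [apply is_derive_C_NormedModule, Hf | apply is_derive_C_NormedModule, Hg | exact Cmult_comm].
Qed.

Lemma Cmod_one_plus_bounds (q : C) (a : R) :
  Cmod q <= a -> 1 - a <= Cmod (1 + q) <= 1 + a.
Proof.
  intros Hq. split.
  - assert (H := Cmod_triangle (1 + q) (- q)).
    replace (1 + q + - q)%C with (RtoC 1) in H by ring.
    rewrite Cmod_1, Cmod_opp in H. lra.
  - assert (H := Cmod_triangle 1 q). rewrite Cmod_1 in H. lra.
Qed.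

Section MulOnePlus.

Variables (F q : C -> C) (a : R).
Hypothesis HF : holo_disc F.
Hypothesis Hq : holo_disc q.
Hypothesis Hqa : forall w, in_disc w -> Cmod (q w) <= a.
Hypothesis Ha : 0 <= a < 1.

Let G := fun z => (F z * (1 + q z))%C.

Lemma holo_disc_mul_one_plus : holo_disc G.
Proof.
  intros z Hz. apply ex_derive_Cmult; [now apply HF|].
  apply (ex_derive_plus (K := C_AbsRing) (V := C_NormedModule) (fun _ => RtoC 1) q);
    [apply ex_derive_const | now apply Hq].
Qed.

Lemma Cmod_mul_one_plus (w : C) : in_disc w ->
  (1 - a) * Cmod (F w) <= Cmod (G w) <= (1 + a) * Cmod (F w).
Proof.
  intros Hw. unfold G. rewrite Cmod_mult.
  assert (Hb := Cmod_one_plus_bounds _ _ (Hqa w Hw)).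
  assert (0 <= Cmod (F w)) by apply Cmod_ge_0.
  split; nra.
Qed.

Lemma bounded_disc_mul_one_plus : bounded_disc F -> bounded_disc G.
Proof.
  intros [M HM]. exists ((1 + a) * M). intros w Hw.
  assert (H := Cmod_mul_one_plus w Hw). specialize (HM w Hw). nra.
Qed.

Lemma zero_free_disc_mul_one_plus : zero_free_disc F -> zero_free_disc G.
Proof.
  intros HFz w Hw HG0. assert (H := Cmod_mul_one_plus w Hw).
  assert (0 < Cmod (F w)) by now apply Cmod_gt_0, HFz.
  rewrite HG0, Cmod_0 in H. nra.
Qed.

Lemma Hp_norm_mul_one_plus (p : R) : 0 < p -> zero_free_disc F -> in_Hp p F ->
  in_Hp p G /\ Rabs (Hp_norm p G - Hp_norm p F) <= a * Hp_norm p F.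
Proof.
  intros Hp HFz HFp.
  assert (HGz := zero_free_disc_mul_one_plus HFz).
  assert (Ha1 : 0 < 1 - a) by lra.
  destruct (Hp_norm_le_scale p (1 + a) F G Hp ltac:(lra) HFp HFz holo_disc_mul_one_plus HGz)
    as [HGp Hup].
  { intros w Hw. apply Cmod_mul_one_plus, Hw. }
  destruct (Hp_norm_le_scale p (/ (1 - a)) G F Hp (Rinv_0_lt_compat _ Ha1) HGp HGz HF HFz)
    as [_ Hlow].
  { intros w Hw. destruct (Cmod_mul_one_plus w Hw) as [H _].
    apply (Rmult_le_reg_l (1 - a)); [lra|]. rewrite <- Rmult_assoc, Rinv_r, Rmult_1_l; lra. }
  assert ((1 - a) * Hp_norm p F <= Hp_norm p G).
  { apply (Rmult_le_compat_l (1 - a)) in Hlow; [|lra].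
    now rewrite <- Rmult_assoc, Rinv_r, Rmult_1_l in Hlow by lra. }
  split; [exact HGp|]. apply Rabs_le. lra.
Qed.

End MulOnePlus.

Lemma sum_n_le_loc (a b : nat -> R) (N : nat) :
  (forall k, (k <= N)%nat -> a k <= b k) -> sum_n a N <= sum_n b N.
Proof.
  induction N as [|N IH]; intros H.
  - rewrite !sum_O. apply H. lia.
  - rewrite !sum_Sn. apply Rplus_le_compat; [apply IH; intros; apply H; lia | apply H; lia].
Qed.

Lemma Cmod_sum_n_le (a : nat -> C) (N : nat) :
  Cmod (sum_n a N) <= sum_n (fun j => Cmod (a j)) N.
Proof. exact (norm_sum_n_m (V := C_NormedModule) a 0 N). Qed.

Lemma sum_n_nonneg (a : nat -> R) (N : nat) : (forall k, 0 <= a k) -> 0 <= sum_n a N.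
Proof. intros Ha. rewrite sum_n_Reals. now apply cond_pos_sum. Qed.

Lemma sum_n_ge_term (a : nat -> R) (N j : nat) :
  (forall k, 0 <= a k) -> (j <= N)%nat -> a j <= sum_n a N.
Proof.
  intros Ha Hj. induction N as [|N IH].
  - replace j with 0%nat by lia. rewrite sum_O. lra.
  - rewrite sum_Sn. change plus with Rplus.
    destruct (Nat.eq_dec j (S N)) as [->|Hne].
    + assert (0 <= sum_n a N) by (apply sum_n_nonneg; intros; apply Ha).
      lra.
    + assert (a j <= sum_n a N) by (apply IH; lia). specialize (Ha (S N)). lra.
Qed.

Section ConvSolve.

Variables (c d e : nat -> C) (n : nat).
Hypothesis Hc0 : c 0%nat <> 0%C.

Definition conv_next : C :=
  ((d (S n) - sum_n (fun j => c (S n - j)%nat * e j) n) / c 0%nat)%C.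

Definition conv_extend (j : nat) : C := if Nat.leb j n then e j else conv_next.

Lemma conv_extend_eq :
  (forall k, (k <= n)%nat -> sum_n (fun j => c (k - j)%nat * e j)%C k = d k) ->
  forall k, (k <= S n)%nat -> sum_n (fun j => c (k - j)%nat * conv_extend j)%C k = d k.
Proof.
  intros Hconv k Hk.
  assert (Hlow : forall m k, (k <= n)%nat ->
            sum_n (fun j => c (m - j)%nat * conv_extend j)%C k
            = sum_n (fun j => c (m - j)%nat * e j)%C k).
  { intros m k' Hk'. apply sum_n_ext_loc. intros j Hj. unfold conv_extend.
    now rewrite (proj2 (Nat.leb_le j n)) by lia. }
  destruct (Nat.eq_dec k (S n)) as [->|Hne]; [|rewrite Hlow by lia; apply Hconv; lia].
  rewrite sum_Sn, Nat.sub_diag, Hlow by lia. unfold conv_extend.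
  replace (Nat.leb (S n) n) with false by (symmetry; apply Nat.leb_gt; lia).
  change (sum_n (fun j => c (S n - j)%nat * e j) n + c 0%nat * conv_next = d (S n))%C.
  unfold conv_next. now field.
Qed.

Lemma Cmod_conv_next_le (K eps : R) : 0 <= K -> 0 <= eps ->
  (forall j, (j <= n)%nat -> Cmod (e j) <= K * eps) -> Cmod (d (S n)) <= eps ->
  Cmod conv_next
  <= (1 + K * sum_n (fun j => Cmod (c (S n - j)%nat)) n) / Cmod (c 0%nat) * eps.
Proof.
  intros HK Heps He Hd.
  set (A := sum_n (fun j => Cmod (c (S n - j)%nat)) n).
  assert (Hs : Cmod (sum_n (fun j => c (S n - j)%nat * e j) n)%C <= A * (K * eps)).
  { unfold A. rewrite <- (sum_n_mult_r (K := R_Ring) (K * eps)).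
    eapply Rle_trans; [apply Cmod_sum_n_le | apply sum_n_le_loc].
    intros k Hk. rewrite Cmod_mult. apply Rmult_le_compat_l; [apply Cmod_ge_0 | now apply He]. }
  assert (HA : 0 <= A) by (apply sum_n_nonneg; intros; apply Cmod_ge_0).
  unfold conv_next. rewrite Cmod_div by exact Hc0. unfold Rdiv.
  rewrite Rmult_assoc, (Rmult_comm (/ _)), <- Rmult_assoc.
  apply Rmult_le_compat_r; [left; apply Rinv_0_lt_compat, Cmod_gt_0, Hc0|].
  unfold Cminus. eapply Rle_trans; [apply Cmod_triangle|]. rewrite Cmod_opp. nra.
Qed.

End ConvSolve.

Lemma conv_solvable (c : nat -> C) : c 0%nat <> 0%C -> forall n : nat,
  exists K, 0 <= K /\
  forall (d : nat -> C) (eps : R), (forall j, (j <= n)%nat -> Cmod (d j) <= eps) ->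
  exists e : nat -> C,
    (forall k, (k <= n)%nat -> sum_n (fun j => c (k - j)%nat * e j)%C k = d k) /\
    (forall j, (j <= n)%nat -> Cmod (e j) <= K * eps).
Proof.
  intros Hc0. assert (Hm : 0 < / Cmod (c 0%nat)) by now apply Rinv_0_lt_compat, Cmod_gt_0.
  induction n as [|n [K [HK IH]]].
  - exists (/ Cmod (c 0%nat)). split; [lra|].
    intros d eps Hd. exists (fun _ => d 0%nat / c 0%nat)%C. split.
    + intros k Hk. replace k with 0%nat by lia. rewrite sum_O. simpl. now field.
    + intros j _. rewrite Cmod_div by exact Hc0. unfold Rdiv. rewrite Rmult_comm.
      apply Rmult_le_compat_l; [lra | apply Hd; lia].
  - set (K' := (1 + K * sum_n (fun j => Cmod (c (S n - j)%nat)) n) / Cmod (c 0%nat)).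
    assert (HK' : 0 <= K').
    { apply Rmult_le_pos; [|lra].
      assert (0 <= sum_n (fun j => Cmod (c (S n - j)%nat)) n)
        by (apply sum_n_nonneg; intros; apply Cmod_ge_0).
      nra. }
    exists (K + K'). split; [lra|]. intros d eps Hd.
    assert (Heps : 0 <= eps) by (eapply Rle_trans; [apply Cmod_ge_0 | apply (Hd 0%nat); lia]).
    destruct (IH d eps) as [e [Hconv He]]; [intros j Hj; apply Hd; lia|].
    exists (conv_extend c d e n). split; [now apply conv_extend_eq|].
    intros j Hj. unfold conv_extend. destruct (Nat.leb_spec j n).
    + apply Rle_trans with (K * eps); [now apply He | nra].
    + apply Rle_trans with (K' * eps); [|nra].
      apply Cmod_conv_next_le; auto.
Qed.

Definition Cpoly (e : nat -> C) (n : nat) (z : C) : C := sum_n (fun j => e j * z ^ j)%C n.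

Lemma Cmod_Cpoly_le (e : nat -> C) (n : nat) (z : C) (M : R) : in_disc z ->
  (forall j, (j <= n)%nat -> Cmod (e j) <= M) -> Cmod (Cpoly e n z) <= INR (S n) * M.
Proof.
  intros Hz He. rewrite <- sum_n_const.
  eapply Rle_trans; [apply Cmod_sum_n_le | apply sum_n_le_loc].
  intros j Hj. rewrite Cmod_mult, Cmod_pow.
  assert (Hzj : Cmod z ^ j <= 1 ^ j)
    by (apply pow_incr; split; [apply Cmod_ge_0 | unfold in_disc in Hz; lra]).
  rewrite pow1 in Hzj.
  apply Rle_trans with (Cmod (e j) * 1).
  - apply Rmult_le_compat_l; [apply Cmod_ge_0 | exact Hzj].
  - rewrite Rmult_1_r. now apply He.
Qed.

Lemma ex_derive_Cpow (z : C) (j : nat) : ex_derive (fun x => (x ^ j)%C) z.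
Proof.
  induction j as [|j IH]; simpl.
  - apply ex_derive_const.
  - apply ex_derive_Cmult; [|exact IH].
    destruct (ex_derive_id (K := C_AbsRing) z) as [l Hl].
    exists l. now apply is_derive_C_NormedModule.
Qed.

Lemma holo_disc_Cpoly (e : nat -> C) (n : nat) : holo_disc (Cpoly e n).
Proof.
  intros z _.
  apply (ex_derive_sum_n (K := C_AbsRing) (V := C_NormedModule) (fun j x => (e j * x ^ j)%C)).
  intros j _.
  apply ex_derive_Cmult; [apply ex_derive_const | apply ex_derive_Cpow].
Qed.

Lemma is_pseries_sum_n {K : AbsRing} {V : NormedModule K}
    (a : nat -> nat -> V) (l : nat -> V) (x : K) (N : nat) :
  (forall j, (j <= N)%nat -> is_pseries (a j) x (l j)) ->
  is_pseries (fun k => sum_n (fun j => a j k) N) x (sum_n l N).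
Proof.
  induction N as [|N IH]; intros H.
  - rewrite sum_O. eapply is_pseries_ext; [|apply H; lia]. intros k. now rewrite sum_O.
  - rewrite sum_Sn. eapply is_pseries_ext;
      [|apply is_pseries_plus; [apply IH; intros; apply H; lia | apply H; lia]].
    intros k. now rewrite sum_Sn.
Qed.

Definition Cpoly_mul_coeffs (c e : nat -> C) (n k : nat) : C :=
  (c k + sum_n (fun j => e j * PS_incr_n c j k) n)%C.

Lemma taylor_coeffs_mul_one_plus_Cpoly (f : C -> C) (c e : nat -> C) (n : nat) :
  taylor_coeffs f c ->
  taylor_coeffs (fun z => f z * (1 + Cpoly e n z))%C (Cpoly_mul_coeffs c e n).
Proof.
  intros Hf z Hz.
  replace (f z * (1 + Cpoly e n z))%C
    with (plus (f z) (sum_n (fun j => e j * (z ^ j * f z)) n)%C).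
  - assert (Hsum : is_pseries (fun k => sum_n (fun j => e j * PS_incr_n c j k)%C n) z
                      (sum_n (fun j => e j * (z ^ j * f z)) n)%C).
    { apply (is_pseries_sum_n (K := C_AbsRing) (V := C_NormedModule)). intros j _.
      exact (is_pseries_scal (e j) _ z _ (Cmult_comm _ _)
               (is_pseries_incr_n c j z (f z) (Hf z Hz))). }
    exact (is_pseries_plus c _ z _ _ (Hf z Hz) Hsum).
  - unfold Cpoly. rewrite (sum_n_ext _ (fun j => mult (f z) (e j * z ^ j)%C))
      by (intros j; change (e j * (z ^ j * f z) = f z * (e j * z ^ j))%C; ring).
    rewrite sum_n_mult_l. set (P := sum_n (fun j => e j * z ^ j)%C n).
    change (f z + f z * P = f z * (1 + P))%C. ring.
Qed.

Lemma Cpoly_mul_coeffs_low (c e : nat -> C) (n k : nat) : (k <= n)%nat ->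
  Cpoly_mul_coeffs c e n k = (c k + sum_n (fun j => c (k - j)%nat * e j) k)%C.
Proof.
  intros Hk. unfold Cpoly_mul_coeffs. f_equal.
  induction n as [|n IH].
  - replace k with 0%nat by lia. rewrite !sum_O, PS_incr_n_simplify. simpl. apply Cmult_comm.
  - destruct (Nat.eq_dec k (S n)) as [->|Hne].
    + apply sum_n_ext_loc. intros j Hj. rewrite PS_incr_n_simplify.
      destruct (Compare_dec.le_lt_dec j (S n)); [apply Cmult_comm | lia].
    + rewrite sum_Sn, IH by lia. rewrite PS_incr_n_simplify.
      destruct (Compare_dec.le_lt_dec (S n) k); [lia|].
      set (P := sum_n (fun j => c (k - j)%nat * e j)%C k).
      change (P + e (S n) * 0 = P)%C. ring.
Qed.

Lemma taylor_coeffs_0 (f : C -> C) (c : nat -> C) : taylor_coeffs f c -> c 0%nat = f 0.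
Proof.
  intros Ht.
  apply (filterlim_locally_unique (F := eventually)
           (sum_n (fun k => scal (@pow_n C_Ring (RtoC 0) k) (c k)))).
  - exact (is_pseries_0 (V := C_NormedModule) c).
  - apply Ht. unfold in_disc. rewrite Cmod_0. lra.
Qed.

Lemma Cmod_le_eucl_norm (n : nat) (d : nat -> C) (j : nat) :
  (j <= n)%nat -> Cmod (d j) <= eucl_norm n d.
Proof.
  intros Hj. unfold eucl_norm. rewrite <- (sqrt_pow2 (Cmod (d j))) by apply Cmod_ge_0.
  apply sqrt_le_1_alt, (sum_n_ge_term (fun j => Cmod (d j) ^ 2));
    [intros; apply pow2_ge_0 | exact Hj].
Qed.

Theorem proposition2 (p : R) (n : nat) (f : C -> C) (c : nat -> C) :
  1 < p -> (1 < n)%nat ->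
  holo_disc f -> bounded_disc f -> zero_free_disc f -> in_Hp p f ->
  taylor_coeffs f c ->
  ~ poly_le_on_disc f n ->
  exists eps0 : R, 0 < eps0 /\
  exists K : R,
    forall (eps : R) (d : nat -> C),
      eps < eps0 -> eucl_norm n d <= eps ->
      exists (fs : C -> C) (cs : nat -> C),
        holo_disc fs /\ bounded_disc fs /\ zero_free_disc fs /\ in_Hp p fs /\
        taylor_coeffs fs cs /\
        (forall j : nat, (j <= n)%nat -> cs j = (c j + d j)%C) /\
        Rabs (Hp_norm p fs - Hp_norm p f) <= K * eps.
Proof.
  intros Hp _ Hf Hfb Hfz Hfp Hc _.
  assert (Hc0 : c 0%nat <> 0%C).
  { rewrite (taylor_coeffs_0 f c Hc). apply Hfz. unfold in_disc. rewrite Cmod_0. lra. }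
  destruct (conv_solvable c Hc0 n) as [K [HK Hsolve]].
  set (L := INR (S n) * K).
  assert (HL : 0 <= L) by (apply Rmult_le_pos; [apply pos_INR | exact HK]).
  exists (/ (L + 1)). split; [apply Rinv_0_lt_compat; lra|].
  exists (L * Hp_norm p f). intros eps d Heps Hd.
  assert (Heps0 : 0 <= eps) by (eapply Rle_trans; [apply sqrt_pos | exact Hd]).
  assert (Ha : 0 <= L * eps < 1).
  { apply (Rmult_lt_compat_l (L + 1)) in Heps; [|lra]. rewrite Rinv_r in Heps by lra. nra. }
  destruct (Hsolve d eps) as [e [Hconv He]].
  { intros j Hj. eapply Rle_trans; [apply Cmod_le_eucl_norm, Hj | exact Hd]. }
  assert (HQ : forall w, in_disc w -> Cmod (Cpoly e n w) <= L * eps).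
  { intros w Hw. unfold L. rewrite Rmult_assoc. now apply Cmod_Cpoly_le. }
  assert (HQh := holo_disc_Cpoly e n).
  destruct (Hp_norm_mul_one_plus f (Cpoly e n) (L * eps) Hf HQh HQ Ha p) as [Hfsp Hnorm];
    [lra | exact Hfz | exact Hfp |].
  exists (fun z => f z * (1 + Cpoly e n z))%C, (Cpoly_mul_coeffs c e n).
  split; [|split; [|split; [|split; [|split; [|split]]]]].
  - exact (holo_disc_mul_one_plus f (Cpoly e n) Hf HQh).
  - exact (bounded_disc_mul_one_plus f (Cpoly e n) (L * eps) HQ Ha Hfb).
  - exact (zero_free_disc_mul_one_plus f (Cpoly e n) (L * eps) HQ Ha Hfz).
  - exact Hfsp.
  - now apply taylor_coeffs_mul_one_plus_Cpoly.
  - intros j Hj. rewrite Cpoly_mul_coeffs_low, Hconv by exact Hj. reflexivity.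
  - replace (L * Hp_norm p f * eps) with (L * eps * Hp_norm p f) by ring. exact Hnorm.
Qed.
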